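(* Let $(\mathfrak g,[\cdot,\cdot],\delta,n)$ be an NL bialgebra and $k\ge1$. Then $\delta_{({}^tn)^k}(\xi)=\iota_{({}^tn)^k}\delta(\xi)-\delta(n^k\xi)$ defines a 1-cocycle for $[\cdot,\cdot]$ if and only if $\delta$ is a 1-cocycle for the deformed bracket $[\cdot,\cdot]_{n^k}$.
   Context: $(\mathfrak g,[\cdot,\cdot])$ is a finite-dimensional real Lie algebra; $\langle\mathrm{ad}^*_\xi\eta,\zeta\rangle=-\langle\eta,[\xi,\zeta]\rangle$. Elements of $\wedge^2\mathfrak g$ are skew-symmetric bilinear forms on $\mathfrak g^*$; for linear $\phi:\mathfrak g^*\to\mathfrak g^*$, $(\iota_\phi P)(\eta_1,\eta_2)=P(\phi\eta_1,\eta_2)+P(\eta_1,\phi\eta_2)$; $\mathrm{ad}^{(2)}_\xi=\iota_{\mathrm{ad}^*_\xi}$. A linear $\delta:\mathfrak g\to\wedge^2\mathfrak g$ is a 1-cocycle for $[\cdot,\cdot]$ if $\mathrm{ad}^{(2)}_{\xi_1}\delta(\xi_2)-\mathrm{ad}^{(2)}_{\xi_2}\delta(\xi_1)-\delta([\xi_1,\xi_2])=0$; a Lie bialgebra $(\mathfrak g,[\cdot,\cdot],\delta)$ has such $\delta$ with dual bracket $\langle[\eta_1,\eta_2]_{\mathfrak g^*},\xi\rangle=\delta(\xi)(\eta_1,\eta_2)$ a Lie bracket. For linear $m:\mathfrak g\to\mathfrak g$, $[\xi_1,\xi_2]_m=[m\xi_1,\xi_2]+[\xi_1,m\xi_2]-m[\xi_1,\xi_2]$;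 $m$ is Nijenhuis if $m[\xi_1,\xi_2]_m=[m\xi_1,m\xi_2]$. ${}^tn$ is the transpose of $n$, $\underline{\mathrm{ad}}^*_{\,\xi}=[{}^tn,\mathrm{ad}^*_\xi]$. A 1-cocycle for $[\cdot,\cdot]_{n^k}$ is a linear $\delta'$ with $\iota_{A^k_{\xi_1}}\delta'(\xi_2)-\iota_{A^k_{\xi_2}}\delta'(\xi_1)-\delta'([\xi_1,\xi_2]_{n^k})=0$, where $A^k_\xi=[({}^tn)^k,\mathrm{ad}^*_\xi]+\mathrm{ad}^*_{n^k\xi}$. An NL bialgebra $(\mathfrak g,[\cdot,\cdot],\delta,n)$ is a Lie bialgebra with a Nijenhuis operator $n$ on $\mathfrak g$ such that (1) $\delta$ is a 1-cocycle for $[\cdot,\cdot]_n$; (2) ${}^tn$ is Nijenhuis on $(\mathfrak g^*,[\cdot,\cdot]_{\mathfrak g^*})$, i.e. ${}^tn([{}^tn\eta_1,\eta_2]_{\mathfrak g^*}+[\eta_1,{}^tn\eta_2]_{\mathfrak g^*}-{}^tn[\eta_1,\eta_2]_{\mathfrak g^*})=[{}^tn\eta_1,{}^tn\eta_2]_{\mathfrak g^*}$; (3) $C(\delta,n)=0$, meaning $\iota_{{}^tn\circ\underline{\mathrm{ad}}^*_{\xi_1}}\delta(\xi_2)-\iota_{{}^tn\circ\underline{\mathrm{ad}}^*_{\xi_2}}\delta(\xi_1)=\iota_{\underline{\mathrm{ad}}^*_{\xi_1}}\delta(n\xi_2)-\iota_{\underline{\mathrm{ad}}^*_{\xi_2}}\delta(n\xi_1)$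 for all $\xi_1,\xi_2$. *)

From HB Require Import structures.
From mathcomp Require Import all_boot all_order all_algebra.
From mathcomp Require Import reals.
Set Implicit Arguments. Unset Strict Implicit. Unset Printing Implicit Defensive.
Import Order.TTheory GRing.Theory Num.Theory.
Local Open Scope ring_scope.

Section NLDefs.
Variable R : realType.
Variable N : nat.
(* g = R^N (row vectors); g^* is identified with R^N via the pairing below. *)
Local Notation V := 'rV[R]_N.

Definition pairing (eta xi : V) : R := \sum_(i < N) eta 0 i * xi 0 i.

Definition lin (f : V -> V) : Prop :=
  forall (a : R) (x y : V), f (a *: x + y) = a *: f x + f y.

Definition bilin (b : V -> V -> V) : Prop :=
  (forall (a : R) (x y z : V), b (a *: x + y) z = a *: b x z + b y z) /\
  (forall (a : R) (x y z : V), b z (a *: x + y) = a *: b z x + b z y).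

Definition is_lie (b : V -> V -> V) : Prop :=
  bilin b /\ (forall x, b x x = 0) /\
  (forall x y z, b x (b y z) + b y (b z x) + b z (b x y) = 0).

(* bivectors: elements of wedge^2 g, seen as functions on g^* x g^* *)
Definition biv := V -> V -> R.

Definition is_biv (P : biv) : Prop :=
  (forall (a : R) (x y z : V), P (a *: x + y) z = a * P x z + P y z) /\
  (forall x y, P x y = - P y x).

Definition iota (phi : V -> V) (P : biv) : biv :=
  fun e1 e2 => P (phi e1) e2 + P e1 (phi e2).

(* ad^*_x : <ad^*_x eta, zeta> = - <eta, [x, zeta]> *)
Definition coad (b : V -> V -> V) (x : V) : V -> V :=
  fun eta => \row_j (- pairing eta (b x (delta_mx 0 j))).

(* transpose ^t n : <^t n eta, xi> = <eta, n xi> *)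
Definition transp (n : V -> V) : V -> V :=
  fun eta => \row_j pairing eta (n (delta_mx 0 j)).

Definition commf (f g : V -> V) : V -> V := fun eta => f (g eta) - g (f eta).

Definition lin_delta (d : V -> biv) : Prop :=
  forall (a : R) (x y e1 e2 : V), d (a *: x + y) e1 e2 = a * d x e1 e2 + d y e1 e2.

(* d : g -> wedge^2 g is linear and a 1-cocycle for the bracket b, where the
   action of x on g^* is A x (ad^(2)_x = iota_{A x}). *)
Definition cocycle_for (A : V -> V -> V) (b : V -> V -> V) (d : V -> biv) : Prop :=
  lin_delta d /\ (forall x, is_biv (d x)) /\
  (forall x y e1 e2, iota (A x) (d y) e1 e2 - iota (A y) (d x) e1 e2
                       - d (b x y) e1 e2 = 0).

Definition cocycle (b : V -> V -> V) (d : V -> biv) : Prop :=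
  cocycle_for (coad b) b d.

Definition deformed (b : V -> V -> V) (m : V -> V) : V -> V -> V :=
  fun x y => b (m x) y + b x (m y) - m (b x y).

Definition nijenhuis (b : V -> V -> V) (m : V -> V) : Prop :=
  lin m /\ (forall x y, m (deformed b m x y) = b (m x) (m y)).

(* dual bracket: <[e1, e2]_{g^*}, xi> = d(xi)(e1, e2) *)
Definition dual_br (d : V -> biv) : V -> V -> V :=
  fun e1 e2 => \row_j d (delta_mx 0 j) e1 e2.

Definition lie_bialgebra (b : V -> V -> V) (d : V -> biv) : Prop :=
  is_lie b /\ cocycle b d /\ is_lie (dual_br d).

Definition Ak (b : V -> V -> V) (n : V -> V) (k : nat) (x : V) : V -> V :=
  fun eta => commf (iter k (transp n)) (coad b x) eta + coad b (iter k n x) eta.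

Definition adu (b : V -> V -> V) (n : V -> V) (x : V) : V -> V :=
  commf (transp n) (coad b x).

Definition C_vanish (b : V -> V -> V) (d : V -> biv) (n : V -> V) : Prop :=
  forall x1 x2 e1 e2,
    iota (transp n \o adu b n x1) (d x2) e1 e2
      - iota (transp n \o adu b n x2) (d x1) e1 e2
    = iota (adu b n x1) (d (n x2)) e1 e2 - iota (adu b n x2) (d (n x1)) e1 e2.

Definition NL_bialgebra (b : V -> V -> V) (d : V -> biv) (n : V -> V) : Prop :=
  [/\ lie_bialgebra b d, nijenhuis b n,
      cocycle_for (Ak b n 1) (deformed b n) d,
      nijenhuis (dual_br d) (transp n) & C_vanish b d n].

Definition delta_k (d : V -> biv) (n : V -> V) (k : nat) : V -> biv :=
  fun x e1 e2 => iota (iter k (transp n)) (d x) e1 e2 - d (iter k n x) e1 e2.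

End NLDefs.

(** The cocycle defect of [delta_T x = iota_T (delta x) - delta (m x)] for the
    bracket [[.,.]] is computed by applying the cocycle identity of [delta] four
    times: with [x], [y] moved to [m x], [m y], and with [e1], [e2] moved to
    [T e1], [T e2].  What remains is exactly the cocycle defect of [delta] for
    the deformed bracket [[.,.]_m] and the twisted coadjoint action
    [[T, ad^*_x] + ad^*_(m x)].  With [T = (^t n)^k] and [m = n^k] the two
    cocycle conditions are therefore equivalent, for any linear [n]. *)

From Pilot Require Import Defs.
From HB Require Import structures.
From mathcomp Require Import all_boot all_order all_algebra.
From mathcomp Require Import reals.
From mathcomp Require Import ring lra.
Import GRing.Theory Num.Theory.
Set Implicit Arguments.
Local Open Scope ring_scope.

Section TwistedCocycle.
Variable R : realType.
Variable N : nat.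
Local Notation V := 'rV[R]_N.
Local Notation biv := (biv R N).

Lemma bivDl (P : biv) : is_biv P -> forall x y z, P (x + y) z = P x z + P y z.
Proof. by move=> [linP _] x y z; rewrite -(scale1r x) linP mul1r scale1r. Qed.

Lemma bivNl (P : biv) : is_biv P -> forall x z, P (- x) z = - P x z.
Proof.
move=> hP x z; have [linP _] := hP.
have P0z : P 0 z = 0 by have := bivDl hP 0 0 z; rewrite addr0 => E; lra.
by have := linP (-1) x 0 z; rewrite addr0 scaleN1r P0z addr0 mulN1r.
Qed.

Lemma bivBl (P : biv) : is_biv P -> forall x y z, P (x - y) z = P x z - P y z.
Proof. by move=> hP x y z; rewrite bivDl // bivNl. Qed.

Lemma bivDr (P : biv) : is_biv P -> forall x y z, P z (x + y) = P z x + P z y.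
Proof.
by move=> hP x y z; have [_ skP] := hP; rewrite skP bivDl // (skP x) (skP y); lra.
Qed.

Lemma bivBr (P : biv) : is_biv P -> forall x y z, P z (x - y) = P z x - P z y.
Proof.
by move=> hP x y z; have [_ skP] := hP; rewrite skP bivBl // (skP x) (skP y); lra.
Qed.

Lemma lin_iter (f : V -> V) k : lin f -> lin (iter k f).
Proof. by move=> linf; elim: k => [|k IHk] a x y //=; rewrite IHk linf. Qed.

Lemma lin_transp (n : V -> V) : lin (transp n).
Proof.
move=> a x y; apply/rowP => j; rewrite !mxE /pairing big_distrr -big_split /=.
by apply: eq_bigr => i _; rewrite !mxE mulrDl mulrA.
Qed.

Lemma is_biv_iota (phi : V -> V) (P : biv) :
  lin phi -> is_biv P -> is_biv (Defs.iota phi P).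
Proof.
move=> linphi [linP skP]; split=> [a x y z | x y]; rewrite /Defs.iota.
- by rewrite linphi !linP; lra.
- by rewrite (skP (phi x)) (skP x); lra.
Qed.

Lemma lin_deltaD (d : V -> biv) : lin_delta d ->
  forall x y e1 e2, d (x + y) e1 e2 = d x e1 e2 + d y e1 e2.
Proof. by move=> linD x y e1 e2; rewrite -(scale1r x) linD mul1r scale1r. Qed.

Lemma lin_deltaB (d : V -> biv) : lin_delta d ->
  forall x y e1 e2, d (x - y) e1 e2 = d x e1 e2 - d y e1 e2.
Proof.
move=> linD x y e1 e2; rewrite lin_deltaD //.
have d0 : d 0 e1 e2 = 0 by have := lin_deltaD linD 0 0 e1 e2; rewrite addr0 => E; lra.
by have := linD (-1) y 0 e1 e2; rewrite scaleN1r !addr0 d0 addr0 mulN1r => ->.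
Qed.

Definition cocycle_defect (A : V -> V -> V) (br : V -> V -> V) (d : V -> biv)
    (x y e1 e2 : V) : R :=
  Defs.iota (A x) (d y) e1 e2 - Defs.iota (A y) (d x) e1 e2 - d (br x y) e1 e2.

Variables (b : V -> V -> V) (d : V -> biv) (T m : V -> V).

Definition twisted_coad (x : V) : V -> V :=
  fun eta => commf T (coad b x) eta + coad b (m x) eta.

Definition twisted_delta : V -> biv :=
  fun x e1 e2 => Defs.iota T (d x) e1 e2 - d (m x) e1 e2.

Hypothesis dcocycle : cocycle b d.

Lemma cocycle_defect_twisted_delta x y e1 e2 :
  cocycle_defect (coad b) b twisted_delta x y e1 e2
  = cocycle_defect twisted_coad (deformed b m) d x y e1 e2.
Proof.
have [linD [bivD cocD]] := dcocycle.
have cocE u v f1 f2 :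
    d (b u v) f1 f2 = Defs.iota (coad b u) (d v) f1 f2 - Defs.iota (coad b v) (d u) f1 f2.
  by have := cocD u v f1 f2; lra.
have twL u v f1 f2 : d u (twisted_coad v f1) f2
    = d u (T (coad b v f1)) f2 - d u (coad b v (T f1)) f2 + d u (coad b (m v) f1) f2.
  by rewrite /twisted_coad /commf bivDl // bivBl.
have twR u v f1 f2 : d u f2 (twisted_coad v f1)
    = d u f2 (T (coad b v f1)) - d u f2 (coad b v (T f1)) + d u f2 (coad b (m v) f1).
  by rewrite /twisted_coad /commf bivDr // bivBr.
rewrite /cocycle_defect /twisted_delta /deformed /Defs.iota lin_deltaB // lin_deltaD //.
rewrite !twL !twR !cocE /Defs.iota; ring.
Qed.

Hypotheses (linT : lin T) (linm : lin m).

Lemma cocycle_twisted_deltaP :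
  cocycle b twisted_delta <-> cocycle_for twisted_coad (deformed b m) d.
Proof.
have [linD [bivD _]] := dcocycle.
split=> [[_ [_ cocTw]] | [_ [_ cocDef]]].
  split=> //; split=> // x y e1 e2.
  by have := cocycle_defect_twisted_delta x y e1 e2; rewrite /cocycle_defect cocTw.
split=> [a x y e1 e2 | ]; first by rewrite /twisted_delta /Defs.iota linm !linD; lra.
split=> [x | x y e1 e2].
  have [linI skI] := is_biv_iota linT (bivD x); have [linM skM] := bivD (m x).
  split=> [a u v z | u v]; rewrite /twisted_delta.
  - by rewrite linI linM; lra.
  - by rewrite skI skM; lra.
by have := cocycle_defect_twisted_delta x y e1 e2; rewrite /cocycle_defect cocDef.
Qed.

End TwistedCocycle.

Theorem mainTheorem12 (R : realType) (N : nat)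
  (b : 'rV[R]_N -> 'rV[R]_N -> 'rV[R]_N) (d : 'rV[R]_N -> biv R N)
  (n : 'rV[R]_N -> 'rV[R]_N) (k : nat) :
  NL_bialgebra b d n -> (1 <= k)%N ->
  (cocycle b (delta_k d n k) <-> cocycle_for (Ak b n k) (deformed b (iter k n)) d).
Proof.
move=> [[_ [dcocycle _]] [linn _] _ _ _] _.
exact (cocycle_twisted_deltaP dcocycle (lin_iter k (@lin_transp R N n)) (lin_iter k linn)).
Qed.
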